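(* Let $f$ be a uniform continuation of $F$, and let $K$ be a sequence of positive real numbers approaching $\infty$. Then $\{f^{-1}(\lfloor K_n\rfloor)\}=\{f^{-1}(K_n)\}+o(1)$ as $n\to\infty$.
   Context: $F$: $F_1=1,F_2=2,F_{n+2}=F_{n+1}+F_n$. A uniform continuation of $F$ is an increasing continuous function $f:[1,\infty)\to\mathbb{R}$ with $f(n)=F_n$ for all $n\in\mathbb{N}$ such that $f_n(p)=\frac{f(n+p)-f(n)}{f(n+1)-f(n)}$ ($p\in[0,1]$) converges uniformly on $[0,1]$ to an increasing continuous function $f_\infty$; $f^{-1}$ denotes the inverse of $f$, and $\{y\}$ denotes the fractional part. *)

From Stdlib Require Import Reals Lra.
From Coquelicot Require Import Coquelicot.
Open Scope R_scope.

(* Fib_aux k = F_{k+1}: F_1 = 1, F_2 = 2, F_{n+2} = F_{n+1} + F_n. *)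
Fixpoint Fib_aux (k : nat) : R :=
  match k with
  | O => 1
  | S O => 2
  | S ((S k') as k1) => Fib_aux k1 + Fib_aux k'
  end.

(* F n = F_n for n >= 1 (F 0 is an unused dummy value). *)
Definition F (n : nat) : R := Fib_aux (Nat.pred n).

Definition fseq (f : R -> R) (n : nat) (p : R) : R :=
  (f (INR n + p) - f (INR n)) / (f (INR n + 1) - f (INR n)).

Definition uniform_continuation (f : R -> R) : Prop :=
  (forall x y, 1 <= x -> x < y -> f x < f y) /\
  (forall x, 1 <= x ->
     filterlim f (within (fun y => 1 <= y) (locally x)) (locally (f x))) /\
  (forall n : nat, (1 <= n)%nat -> f (INR n) = F n) /\
  (exists finf : R -> R,
     (forall p q, 0 <= p -> p < q -> q <= 1 -> finf p < finf q) /\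
     (forall p, 0 <= p <= 1 ->
        filterlim finf (within (fun q => 0 <= q <= 1) (locally p))
                  (locally (finf p))) /\
     (forall eps, 0 < eps -> exists N : nat, forall n : nat,
        (N <= n)%nat -> (1 <= n)%nat ->
        forall p, 0 <= p <= 1 -> Rabs (fseq f n p - finf p) < eps)).

(* fractional part {y} = y - floor y  (Stdlib: frac_part, Int_part = floor) *)
Definition frac (y : R) : R := frac_part y.
Definition floorR (y : R) : R := IZR (Int_part y).

(* Let y lie in [F_N, F_(N+1)). Since F_N is an integer, the floor m of y lies
   in the same interval, so x = f^-1(y) and x' = f^-1(m) both lie in [N, N+1)
   and f_N(x - N) - f_N(x' - N) = (y - m) / (F_(N+1) - F_N) = O(1/y).
   Uniform convergence turns this into f_oo({x}) - f_oo({x'}) -> 0, and a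
   strictly increasing function on [0,1] maps points at distance >= eps to
   points at distance >= some delta(eps) > 0; hence {x} - {x'} -> 0. *)

From Stdlib Require Import Reals Lra Lia.
From Coquelicot Require Import Coquelicot.
Open Scope R_scope.

Lemma finite_min_pos (h : nat -> R) (k : nat) :
  (forall i, (i < k)%nat -> 0 < h i) ->
  exists d, 0 < d /\ forall i, (i < k)%nat -> d <= h i.
Proof.
  induction k as [|k IH]; intros h_pos.
  - exists 1; split; [lra | intros i Hi; lia].
  - destruct IH as [d [Hd Hmin]]; [intros i Hi; apply h_pos; lia|].
    exists (Rmin d (h k)); split.
    + apply Rmin_glb_lt; [exact Hd | apply h_pos; lia].
    + intros i Hi; destruct (Nat.eq_dec i k) as [->|Hik].
      * apply Rmin_r.
      * eapply Rle_trans; [apply Rmin_l | apply Hmin; lia].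
Qed.

Lemma strictly_increasing_separation (g : R -> R) :
  (forall p q, 0 <= p -> p < q -> q <= 1 -> g p < g q) ->
  forall eps, 0 < eps -> exists d, 0 < d /\
    forall p' p, 0 <= p' -> p' <= p -> p <= 1 -> g p - g p' < d -> p - p' < eps.
Proof.
  intros g_incr eps Heps.
  assert (g_le : forall p q, 0 <= p -> p <= q -> q <= 1 -> g p <= g q).
  { intros p q Hp Hpq Hq; destruct (Rle_lt_or_eq_dec _ _ Hpq) as [Hlt|<-].
    - left; apply g_incr; lra.
    - lra. }
  destruct (archimed_cor1 (eps / 2)) as [k [Hk Hk0]]; [lra|].
  assert (Hk0R : 0 < INR k) by (apply lt_0_INR; exact Hk0).
  set (s := / INR k) in Hk.
  assert (Hs : 0 < s) by (apply Rinv_0_lt_compat; exact Hk0R).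
  assert (Hks : INR k * s = 1) by (apply Rinv_r; lra).
  (* d is the least increment of g over the cells [i s, (i+1) s] of width s < eps / 2;
     an interval [p', p] of length >= eps contains a whole cell. *)
  destruct (finite_min_pos (fun i => g (INR (S i) * s) - g (INR i * s)) k)
    as [d [Hd Hmin]].
  { intros i Hi.
    assert (Hik : INR (S i) <= INR k) by (apply le_INR; lia).
    pose proof (pos_INR i); rewrite S_INR in Hik |- *.
    enough (g (INR i * s) < g ((INR i + 1) * s)) by lra.
    apply g_incr; nra. }
  exists d; split; [exact Hd|].
  intros p' p Hp' Hp'p Hp1 Hgd.
  destruct (Rlt_or_le (p - p') eps) as [|Hfar]; [assumption | exfalso].
  destruct (nfloor_ex (p' * INR k)) as [j Hj]; [nra|].
  assert (Hp's : p' = p' * INR k * s) by (rewrite Rmult_assoc, Hks; ring).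
  assert (Hjs : INR j * s <= p') by (rewrite Hp's; apply Rmult_le_compat_r; lra).
  assert (Hlo : p' < (INR j + 1) * s) by (rewrite Hp's; apply Rmult_lt_compat_r; lra).
  assert (Hhi : (INR j + 1 + 1) * s <= p) by lra.
  assert (Hjk : (S j < k)%nat).
  { apply INR_lt, (Rmult_lt_reg_r s); [exact Hs|]; rewrite Hks, S_INR; lra. }
  pose proof (Hmin (S j) Hjk) as Hcell; rewrite !S_INR in Hcell.
  assert (g p' <= g ((INR j + 1) * s)) by (apply g_le; lra).
  assert (g ((INR j + 1 + 1) * s) <= g p) by (apply g_le; lra).
  lra.
Qed.

Lemma frac_of_nat_floor (x : R) (n : nat) :
  INR n <= x < INR n + 1 -> frac x = x - INR n.
Proof.
  intros Hx; unfold frac; symmetry.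
  apply (Int_part_frac_part_spec x (Z.of_nat n)); [lra | rewrite <- INR_IZR_INZ; ring].
Qed.

Lemma nat_le_floorR (k : nat) (y : R) : INR k <= y -> INR k <= floorR y.
Proof.
  intros Hky; unfold floorR; rewrite INR_IZR_INZ in Hky |- *.
  destruct (base_Int_part y) as [_ Hy].
  destruct (Z.le_gt_cases (Z.of_nat k) (Int_part y)) as [Hle|Hgt].
  - apply IZR_le; exact Hle.
  - assert (IZR (Int_part y) + 1 <= IZR (Z.of_nat k)).
    { rewrite <- plus_IZR; apply IZR_le; lia. }
    lra.
Qed.

Lemma floorR_bounds (y : R) : y - 1 < floorR y <= y.
Proof. unfold floorR; destruct (base_Int_part y); lra. Qed.

(* [F_(k+1) <= 2 F_k] is only there to carry the induction. *)
Lemma Fib_aux_bounds (k : nat) :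
  1 <= Fib_aux k /\ Fib_aux k <= Fib_aux (S k) /\
  Fib_aux (S k) <= 2 * Fib_aux k /\ 3 * Fib_aux k <= 2 * Fib_aux (S k).
Proof.
  induction k as [|k IH]; [simpl; lra|].
  change (Fib_aux (S (S k))) with (Fib_aux (S k) + Fib_aux k); lra.
Qed.

Lemma F_ge_1 (n : nat) : 1 <= F n.
Proof. apply Fib_aux_bounds. Qed.

Lemma F_le (a b : nat) : (a <= b)%nat -> F a <= F b.
Proof.
  unfold F; intros Hab; induction Hab as [|b Hab IH]; [lra|].
  destruct b as [|b]; [exact IH|].
  change (Fib_aux (Nat.pred a) <= Fib_aux b) in IH.
  change (Fib_aux (Nat.pred a) <= Fib_aux (S b)); pose proof (Fib_aux_bounds b); lra.
Qed.

Lemma F_nat (n : nat) : exists k : nat, F n = INR k.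
Proof.
  unfold F; generalize (Nat.pred n); clear n.
  enough (Hpair : forall n, (exists a, Fib_aux n = INR a) /\ (exists b, Fib_aux (S n) = INR b))
    by (intros n; apply Hpair).
  induction n as [|n [[a Ha] [b Hb]]].
  - split; [exists 1%nat | exists 2%nat]; simpl; lra.
  - split; [exists b; exact Hb|].
    exists (b + a)%nat; change (Fib_aux (S (S n))) with (Fib_aux (S n) + Fib_aux n).
    rewrite plus_INR, Ha, Hb; reflexivity.
Qed.

Lemma F_gap (n : nat) : (1 <= n)%nat -> F (S n) <= 3 * (F (S n) - F n).
Proof.
  intros Hn; unfold F; destruct n as [|n]; [lia|].
  change (Fib_aux (S n) <= 3 * (Fib_aux (S n) - Fib_aux n)).
  pose proof (Fib_aux_bounds n); lra.
Qed.

Section Continuation.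

Variables (f finv : R -> R).
Hypothesis f_incr : forall x y, 1 <= x -> x < y -> f x < f y.
Hypothesis f_F : forall n : nat, (1 <= n)%nat -> f (INR n) = F n.
Hypothesis finv_spec : forall y, 1 <= y -> 1 <= finv y /\ f (finv y) = y.

Lemma le_of_f_le (a b : R) : 1 <= a -> 1 <= b -> f a <= f b -> a <= b.
Proof.
  intros Ha Hb Hf; destruct (Rle_or_lt a b) as [|Hba]; [assumption|].
  specialize (f_incr b a Hb Hba); lra.
Qed.

Lemma fseq_finv (N : nat) (y : R) : (1 <= N)%nat -> 1 <= y ->
  fseq f N (finv y - INR N) = (y - F N) / (F (S N) - F N).
Proof.
  intros HN Hy; unfold fseq.
  replace (INR N + (finv y - INR N)) with (finv y) by ring.
  rewrite <- S_INR, (proj2 (finv_spec y Hy)), !f_F; [reflexivity | lia | exact HN].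
Qed.

Lemma finv_floorR_same_cell (y : R) : 1 <= y -> exists N : nat, (1 <= N)%nat /\
  F N <= floorR y /\ y < F (S N) /\
  INR N <= finv (floorR y) <= finv y /\ finv y < INR N + 1.
Proof.
  intros Hy; destruct (finv_spec y Hy) as [Hx1 Hfx].
  destruct (nfloor_ex (finv y)) as [N HN]; [lra|].
  assert (HN1 : (1 <= N)%nat).
  { destruct N as [|N]; [simpl in HN; lra | lia]. }
  assert (HN1R : 1 <= INR N) by (apply (le_INR 1); exact HN1).
  assert (HFN : F N <= y).
  { rewrite <- f_F, <- Hfx by exact HN1.
    destruct (Rle_lt_or_eq_dec _ _ (proj1 HN)) as [Hlt|<-]; [left; apply f_incr|]; lra. }
  assert (HFSN : y < F (S N)).
  { rewrite <- f_F, <- Hfx, S_INR by lia; apply f_incr; lra. }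
  destruct (F_nat N) as [k Hk].
  assert (HFm : F N <= floorR y) by (rewrite Hk in *; apply nat_le_floorR; exact HFN).
  pose proof (floorR_bounds y) as Hm.
  pose proof (F_ge_1 N).
  destruct (finv_spec (floorR y)) as [Hx'1 Hfx']; [lra|].
  exists N; split; [exact HN1|]; repeat split; try lra.
  - apply le_of_f_le; [exact HN1R | exact Hx'1 | rewrite f_F, Hfx' by exact HN1; lra].
  - apply le_of_f_le; [exact Hx'1 | exact Hx1 | rewrite Hfx, Hfx'; lra].
Qed.

Variable finf : R -> R.
Hypothesis finf_incr : forall p q, 0 <= p -> p < q -> q <= 1 -> finf p < finf q.
Hypothesis fseq_unif : forall eps, 0 < eps -> exists N : nat, forall n : nat,
  (N <= n)%nat -> (1 <= n)%nat ->
  forall p, 0 <= p <= 1 -> Rabs (fseq f n p - finf p) < eps.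

Lemma frac_finv_floorR_close (eps : R) : 0 < eps -> exists Y, forall y, Y <= y ->
  Rabs (frac (finv (floorR y)) - frac (finv y)) < eps.
Proof.
  intros Heps.
  destruct (strictly_increasing_separation finf finf_incr eps Heps) as [d [Hd Hsep]].
  destruct (fseq_unif (d / 3)) as [N0 HN0]; [lra|].
  (* (y - m) / (F_(N+1) - F_N) < 3 / y <= d / 3 once y >= 9 / d *)
  exists (Rmax (9 / d) (Rmax 1 (F N0))); intros y Hy.
  pose proof (Rmax_l (9 / d) (Rmax 1 (F N0))); pose proof (Rmax_r (9 / d) (Rmax 1 (F N0))).
  pose proof (Rmax_l 1 (F N0)); pose proof (Rmax_r 1 (F N0)).
  destruct (finv_floorR_same_cell y) as [N [HN1 [HFm [HFSN [Hx' Hx]]]]]; [lra|].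
  set (m := floorR y) in *; set (x := finv y) in *; set (x' := finv m) in *.
  pose proof (floorR_bounds y) as Hm; fold m in Hm.
  assert (HN0N : (N0 <= N)%nat).
  { destruct (Nat.le_gt_cases N0 N) as [|HNN0]; [assumption|].
    pose proof (F_le (S N) N0 HNN0); lra. }
  assert (Hfseq : fseq f N (x - INR N) - fseq f N (x' - INR N) < d / 3).
  { pose proof (F_ge_1 N).
    unfold x, x'; rewrite !fseq_finv by first [exact HN1 | lra].
    pose proof (F_gap N HN1) as Hgap; set (G := F (S N) - F N) in *.
    assert (H9 : 9 <= y * d).
    { replace 9 with (9 / d * d) by (field; lra); apply Rmult_le_compat_r; lra. }
    replace ((y - F N) / G - (m - F N) / G) with ((y - m) / G) by (field; lra).
    apply (Rmult_lt_reg_r G); [lra|].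
    unfold Rdiv at 1; rewrite Rmult_assoc, Rinv_l by lra; nra. }
  pose proof (HN0 N HN0N HN1 (x - INR N)) as Ex; pose proof (HN0 N HN0N HN1 (x' - INR N)) as Ex'.
  apply Rabs_def2 in Ex; [|lra]; apply Rabs_def2 in Ex'; [|lra].
  assert (Hclose : (x - INR N) - (x' - INR N) < eps) by (apply Hsep; lra).
  rewrite !(frac_of_nat_floor _ N) by lra.
  apply Rabs_def1; lra.
Qed.

End Continuation.

Theorem lemma5p5 (f finv : R -> R) (K : nat -> R) :
  uniform_continuation f ->
  (* finv is the inverse of f : [1,oo) -> [1,oo) *)
  (forall y, 1 <= y -> 1 <= finv y /\ f (finv y) = y) ->
  (forall n, 0 < K n) ->
  is_lim_seq K p_infty ->
  is_lim_seq (fun n => frac (finv (floorR (K n))) - frac (finv (K n))) 0.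
Proof.
  intros [f_incr [_ [f_F [finf [finf_incr [_ fseq_unif]]]]]] finv_spec _ HK.
  apply is_lim_seq_spec; intros eps.
  destruct (frac_finv_floorR_close f finv f_incr f_F finv_spec finf finf_incr
              fseq_unif eps (cond_pos eps)) as [Y HY].
  apply is_lim_seq_spec in HK; destruct (HK Y) as [M HM].
  exists M; intros n Hn; rewrite Rminus_0_r; apply HY; left; apply HM; exact Hn.
Qed.
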